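(* Let $p,q$ be distinct primes, $n\geqslant1$, and let $S$ be a minimal generating set for a $C_{p^nq}$-transfer system. Then $|S|\leqslant 3k+1$ if $n=2k$, and $|S|\leqslant 3k+2$ if $n=2k+1$.
   Context: For a finite group $G$, an arrow is a pair $(H,K)$ of subgroups with $H\leqslant K$; identity arrows are those with $H=K$. A $G$-transfer system is a set of arrows containing all identities and closed under composition ($(H,K),(K,L)\Rightarrow(H,L)$), conjugation ($(H,K)\Rightarrow(gHg^{-1},gKg^{-1})$) and restriction ($(H,K)$ and $L\leqslant K\Rightarrow(H\cap L,L)$). For a set $S$ of non-identity arrows, $\langle S\rangle$ is the smallest transfer system containing $S$; $S$ is a minimal generating set of $\mathsf{T}$ if $\langle S\rangle=\mathsf{T}$ and $\langle S\setminus\{s\}\rangle\neq\mathsf{T}$ for all $s\in S$. *)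

From mathcomp Require Import all_boot all_fingroup.
Set Implicit Arguments. Unset Strict Implicit. Unset Printing Implicit Defensive.
Local Open Scope group_scope.

Section TransferSystems.
Variable gT : finGroupType.
Implicit Types (G : {group gT}) (A : {set gT}).

Definition arrow := ({set gT} * {set gT})%type.

Definition subgrp G A : bool := group_set A && (A \subset G).

Definition is_arrow G (a : arrow) : bool :=
  [&& subgrp G a.1, subgrp G a.2 & a.1 \subset a.2].

Definition is_identity (a : arrow) : bool := a.1 == a.2.

Definition transfer_system G (T : {set arrow}) : Prop :=
  [/\ (forall a, a \in T -> is_arrow G a),
      (forall H, subgrp G H -> (H, H) \in T),
      (forall H K L, (H, K) \in T -> (K, L) \in T -> (H, L) \in T),
      (forall H K g, (H, K) \in T -> g \in G -> (H :^ g, K :^ g) \in T) &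
      (forall H K L, (H, K) \in T -> subgrp G L -> L \subset K ->
                     (H :&: L, L) \in T)].

Definition generates G (S T : {set arrow}) : Prop :=
  [/\ transfer_system G T, S \subset T &
      forall T', transfer_system G T' -> S \subset T' -> T \subset T'].

Definition minimal_generating_set G (S T : {set arrow}) : Prop :=
  [/\ (forall a, a \in S -> is_arrow G a && ~~ is_identity a),
      generates G S T &
      forall s, s \in S -> ~ generates G (S :\ s) T].

End TransferSystems.

From mathcomp Require Import all_boot all_fingroup all_solvable.
From mathcomp Require Import zify.
From Stdlib Require Import Classical.
Set Implicit Arguments. Unset Strict Implicit. Unset Printing Implicit Defensive.

(* The subgroups of the cyclic group C_(p^n q) form the lattice [0..n] x [0..1],
   and since the group is abelian a transfer system is just a relation on this
   lattice closed under identities, composition and restriction.  Minimality of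
   S says that S is independent: for each s in S some transfer system contains
   the other arrows of S but not s.  In that witness, the highest point of the
   q-type of the target that is reachable from the source of s lies strictly
   below the target of s, and no other arrow of S leaves that point upwards.
   Every arrow lies in exactly two of the classes "q divides the target",
   "horizontal" and "the source is a p-group", and these reachable points give
   injections of the three classes into sets of n + 1, n and n + 1 levels;
   hence 2 |S| <= 3 n + 2. *)

(* [(a, r)] stands for the subgroup of order p ^ a * q ^ r. *)
Definition pt := (nat * bool)%type.
Definition ple (x y : pt) := (x.1 <= y.1) && (x.2 ==> y.2).
Definition pmeet (x y : pt) : pt := (minn x.1 y.1, x.2 && y.2).

Lemma pmeet_idl x y : ple x y -> pmeet x y = x.
Proof.
case: x y => [a r] [c t] /andP[/= /minn_idPl]; rewrite /pmeet /= => ->.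
by case: r; case: t.
Qed.

Lemma ple_pmeet z x y : ple z (pmeet x y) = ple z x && ple z y.
Proof.
rewrite /ple /pmeet /= leq_min -!andbA; congr (_ && _); rewrite andbCA.
by case: z.2; case: x.2; case: y.2; rewrite ?andbT ?andbF.
Qed.

Definition transfer_rel n (R : rel pt) :=
  [/\ forall x, x.1 <= n -> R x x, transitive R &
      forall x y z, R x y -> z.1 <= n -> ple z y -> R (pmeet x z) z].

Definition lattice_arrow n (s : pt * pt) := [&& s.2.1 <= n, ple s.1 s.2 & s.1 != s.2].

Definition independent n (S : seq (pt * pt)) :=
  exists R : pt * pt -> rel pt, forall s, s \in S ->
    [/\ transfer_rel n (R s), ~~ R s s.1 s.2 &
        forall t, t \in S -> t != s -> R s t.1 t.2].

Lemma count_inj_leq (T : eqType) (P : pred T) (f : T -> nat) (s : seq T) m :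
  uniq s -> {in [seq x <- s | P x] &, injective f} ->
  {in s, forall x, P x -> f x < m} -> count P s <= m.
Proof.
move=> s_uniq f_inj f_lt; rewrite -size_filter -(size_map f) -(size_iota 0 m).
apply: uniq_leq_size; first by rewrite map_inj_in_uniq ?filter_uniq.
move=> _ /mapP[x + ->]; rewrite mem_filter mem_iota => /andP[Px sx].
by rewrite f_lt.
Qed.

Lemma count_double_cover (T : eqType) (P1 P2 P3 : pred T) (s : seq T) :
  {in s, forall x, P1 x + P2 x + P3 x = 2} ->
  count P1 s + count P2 s + count P3 s = 2 * size s.
Proof.
elim: s => //= x s IHs two; have := two x (mem_head _ _).
have /IHs : {in s, forall y, P1 y + P2 y + P3 y = 2}.
  by move=> y sy; rewrite two // inE sy orbT.
lia.
Qed.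

Section IndependentArrows.
Variables (n : nat) (S : seq (pt * pt)) (R : pt * pt -> rel pt).
Hypothesis S_arrow : {in S, forall s, lattice_arrow n s}.
Hypothesis R_indep : forall s, s \in S ->
  [/\ transfer_rel n (R s), ~~ R s s.1 s.2 &
      forall t, t \in S -> t != s -> R s t.1 t.2].

Lemma R_refl s x : s \in S -> x.1 <= n -> R s x x.
Proof. by move=> /R_indep[[Rxx _ _] _ _] /Rxx. Qed.

Lemma R_trans s x y z : s \in S -> R s x y -> R s y z -> R s x z.
Proof. by move=> /R_indep[[_ Rtr _] _ _]; apply: Rtr. Qed.

Lemma R_restrict s x y z :
  s \in S -> R s x y -> z.1 <= n -> ple z y -> R s (pmeet x z) z.
Proof. by move=> /R_indep[[_ _ Rres] _ _]; apply: Rres. Qed.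

Lemma R_self s : s \in S -> ~~ R s s.1 s.2.
Proof. by case/R_indep. Qed.

Lemma R_other s t : s \in S -> t \in S -> t != s -> R s t.1 t.2.
Proof. by case/R_indep=> _ _; apply. Qed.

Lemma tgt_le s : s \in S -> s.2.1 <= n.
Proof. by case/S_arrow/and3P. Qed.

Lemma src_le_tgt s : s \in S -> ple s.1 s.2.
Proof. by case/S_arrow/and3P. Qed.

Lemma src_le s : s \in S -> s.1.1 <= n.
Proof. by move=> sS; case/andP: (src_le_tgt sS) => /leq_trans->; rewrite ?tgt_le. Qed.

Lemma src_q_tgt_q s : s \in S -> s.1.2 ==> s.2.2.
Proof. by case/src_le_tgt/andP. Qed.

Lemma src_lt_tgt s : s \in S -> s.1.2 = s.2.2 -> s.1.1 < s.2.1.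
Proof.
case: s => [[a r] [c t]] sS /= rt; case/S_arrow/and3P: sS => _ /andP[/= ac _].
by rewrite rt ltn_neqAle ac andbT; apply: contra => /eqP->.
Qed.

Lemma no_restriction s t :
  s \in S -> t \in S -> t != s -> ple s.2 t.2 -> pmeet t.1 s.2 != s.1.
Proof.
move=> sS tS ts le; apply/eqP=> def_s1; move: (R_self sS).
by have := R_restrict sS (R_other sS tS ts) (tgt_le sS) le; rewrite def_s1 => ->.
Qed.

Lemma same_source s t :
  s \in S -> t \in S -> s.1 = t.1 -> s.2.2 = t.2.2 -> s = t.
Proof.
wlog le_st : s t / s.2.1 <= t.2.1.
  by move=> W sS tS ? ?; case: (leqP s.2.1 t.2.1) => [|/ltnW] le;
    [apply: W | symmetry; apply: W].
move=> sS tS st1 st2; apply/eqP; rewrite eq_sym; apply/negPn/negP => ts.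
have le : ple s.2 t.2 by rewrite /ple le_st st2 implybb.
by move: (no_restriction sS tS ts le); rewrite -st1 pmeet_idl ?src_le_tgt ?eqxx.
Qed.

Lemma vertical_src_max s t :
  s \in S -> t \in S -> ~~ s.1.2 -> s.2.2 -> s.1.1 = s.2.1 ->
  ~~ t.1.2 -> t.2.2 -> s.1.1 < t.1.1 -> False.
Proof.
move=> sS tS s1p s2q s_vert t1p t2q lt_st.
have ts : t != s by apply: contraTneq lt_st => ->; rewrite ltnn.
have le : ple s.2 t.2.
  rewrite /ple s2q t2q implybT andbT -s_vert.
  by case/andP: (src_le_tgt tS) => /(leq_trans (ltnW lt_st)).
have := no_restriction sS tS ts le; rewrite /pmeet (negPf t1p) -s_vert.
by rewrite (minn_idPr (ltnW lt_st)) andFb -(negPf s1p) -surjective_pairing eqxx.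
Qed.

Definition reach s r := \max_(v < n.+1 | R s s.1 (v : nat, r)) v.

Lemma reach_max s r v : v <= n -> R s s.1 (v, r) -> v <= reach s r.
Proof.
move=> vn Rv; rewrite -[v]/(val (Ordinal (vn : v < n.+1))).
exact: leq_bigmax_cond.
Qed.

Lemma reach_reached s r v : v <= n -> R s s.1 (v, r) -> R s s.1 (reach s r, r).
Proof.
move=> vn Rv; have : #|[pred i : 'I_n.+1 | R s s.1 (val i, r)]| > 0.
  by apply/card_gt0P; exists (Ordinal (vn : v < n.+1)).
by case/(eq_bigmax_cond (fun i : 'I_n.+1 => val i)) => i Ri; rewrite /reach => ->.
Qed.

Section Reach.
Variables (s : pt * pt) (r : bool).
Hypotheses (sS : s \in S) (s2r : s.2.2 = r) (base : R s s.1 (s.1.1, r)).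

Lemma reach_bound :
  [/\ s.1.1 <= reach s r, reach s r < s.2.1 & R s s.1 (reach s r, r)].
Proof.
have Rmax := reach_reached (src_le sS) base.
split=> //; first exact: reach_max (src_le sS) base.
rewrite ltnNge; apply/negP => le; move: (R_self sS).
have := R_restrict sS Rmax (tgt_le sS) (_ : ple s.2 (reach s r, r)).
by rewrite pmeet_idl ?src_le_tgt // /ple le s2r implybb => ->.
Qed.

Lemma reach_blocks t :
  t \in S -> t != s -> t.1.1 = reach s r -> r ==> t.1.2 -> t.1.1 < t.2.1 -> False.
Proof.
case: t => [[b u] [c w]] /= tS ts bm ru lt_bc; have [_ _ Rmax] := reach_bound.
have uw := src_q_tgt_q tS.
have le : ple (b.+1, r) (c, w).
  by rewrite /ple /= lt_bc; apply/implyP => /(implyP ru) /(implyP uw).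
have bn : b < n := leq_trans lt_bc (tgt_le tS).
have := R_restrict (z := (b.+1, r)) sS (R_other sS tS ts) bn le.
rewrite /pmeet /= (minn_idPl (leqnSn b)) (andb_idl (implyP ru)) {1}bm => Rstep.
by have := reach_max bn (R_trans sS Rmax Rstep); rewrite -bm ltnn.
Qed.
End Reach.

Lemma reach_inj s t r :
  s \in S -> t \in S -> t != s -> s.2.2 = r -> t.2.2 = r ->
  R s s.1 (s.1.1, r) -> R t t.1 (t.1.1, r) -> ple s.1 t.1 -> reach s r != reach t r.
Proof.
move=> sS tS ts s2r t2r bs bt st; apply/eqP => reach_st.
have [_ _ Rmax] := reach_bound sS s2r bs; have [t_le t_lt _] := reach_bound tS t2r bt.
have le : ple t.1 (reach s r, r).
  by rewrite /ple reach_st t_le -t2r src_q_tgt_q.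
have := R_restrict sS Rmax (src_le tS) le; rewrite pmeet_idl // => Rst.
have := reach_max (tgt_le tS) (_ : R s s.1 (t.2.1, r)).
rewrite reach_st leqNgt t_lt -t2r -surjective_pairing.
by move/(_ (R_trans sS Rst (R_other sS tS ts))).
Qed.

Lemma R_lift_src s t :
  s \in S -> t \in S -> t != s -> ~~ s.1.2 -> ~~ t.1.2 -> t.2.2 -> s.1.1 <= t.1.1 ->
  R s s.1 (s.1.1, true).
Proof.
move=> sS tS ts s1p t1p t2q st.
have le : ple (s.1.1, true) t.2.
  by rewrite /ple t2q andbT; case/andP: (src_le_tgt tS) => /(leq_trans st).
have := R_restrict (z := (s.1.1, true)) sS (R_other sS tS ts) (src_le sS) le.
by rewrite /pmeet /= (minn_idPr st) (negPf t1p) andFb -(negPf s1p) -surjective_pairing.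
Qed.

Lemma inj_by_source (P : pred (pt * pt)) (f : pt * pt -> nat) :
  (forall s t, s \in S -> t \in S -> P s -> P t -> t != s -> s.1.1 <= t.1.1 ->
     f s != f t) ->
  {in [seq s <- S | P s] &, injective f}.
Proof.
move=> neq s t; rewrite !mem_filter => /andP[Ps sS] /andP[Pt tS] fst.
case: (eqVneq t s) => [-> //|ts]; have st : s != t by rewrite eq_sym.
case: (leqP s.1.1 t.1.1) => [|/ltnW] le.
  by move: (neq s t sS tS Ps Pt ts le); rewrite fst eqxx.
by move: (neq t s tS sS Pt Ps st le); rewrite fst eqxx.
Qed.

(* A p-source, q-target arrow whose witness does not relate its source to
   [(s.1.1, true)] has the highest source among such arrows ([R_lift_src]),
   so the label [n] is used at most once. *)
Definition label_tgt s :=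
  if s.1.2 then s.1.1 else if R s s.1 (s.1.1, true) then reach s true else n.

Lemma label_tgt_neq s t : s \in S -> t \in S -> s.2.2 -> t.2.2 -> t != s ->
  s.1.1 <= t.1.1 -> label_tgt s != label_tgt t.
Proof.
move=> sS tS s2q t2q ts st; rewrite /label_tgt.
have [s_lt t_lt] := (src_lt_tgt sS, src_lt_tgt tS).
have [sn tn] := (tgt_le sS, tgt_le tS).
case s1q: s.1.2; case t1q: t.1.2.
- apply: contra_neq ts => st1; symmetry; apply: same_source => //.
    by apply/pair_eqP; rewrite /= st1 s1q t1q !eqxx.
  by rewrite s2q t2q.
- case: ifP => bt; apply/eqP => e.
    apply: (reach_blocks tS t2q bt sS _ e); [by rewrite eq_sym | by rewrite s1q |].
    by apply: s_lt; rewrite s1q s2q.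
  by move: (s_lt (etrans s1q (esym s2q))); rewrite e ltnNge sn.
- case: ifP => bs; apply/eqP => e.
    apply: (reach_blocks sS s2q bs tS ts (esym e)); first by rewrite t1q.
    by apply: t_lt; rewrite t1q t2q.
  by move: (t_lt (etrans t1q (esym t2q))); rewrite -e ltnNge tn.
- case: ifP => bs; case: ifP => bt.
  + by apply: reach_inj; rewrite // /ple st s1q.
  + by have [_ + _] := reach_bound sS s2q bs; rewrite neq_ltn => /leq_trans->.
  + have [_ + _] := reach_bound tS t2q bt.
    by rewrite neq_ltn => /leq_trans->; rewrite ?orbT.
  + by rewrite (R_lift_src sS tS ts) ?s1q ?t1q in bs.
Qed.

Lemma R_refl_src s : s \in S -> s.1.2 = false -> R s s.1 (s.1.1, false).
Proof. by move=> sS s1p; rewrite -s1p -surjective_pairing R_refl ?src_le. Qed.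

Definition label_horiz s := if s.1.2 then s.1.1 else reach s false.

Lemma label_horiz_neq s t : s \in S -> t \in S -> s.1.2 == s.2.2 -> t.1.2 == t.2.2 ->
  t != s -> s.1.1 <= t.1.1 -> label_horiz s != label_horiz t.
Proof.
move=> sS tS /eqP s_hor /eqP t_hor ts st; rewrite /label_horiz.
have [s_lt t_lt] := (src_lt_tgt sS s_hor, src_lt_tgt tS t_hor).
case s1q: s.1.2; case t1q: t.1.2.
- apply: contra_neq ts => st1; symmetry; apply: same_source => //.
    by apply/pair_eqP; rewrite /= st1 s1q t1q !eqxx.
  by rewrite -s_hor -t_hor s1q t1q.
- apply/eqP => e; rewrite t1q in t_hor.
  by apply: (reach_blocks tS (esym t_hor) (R_refl_src tS t1q) sS _ e); rewrite // eq_sym.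
- apply/eqP => e; rewrite s1q in s_hor.
  exact: (reach_blocks sS (esym s_hor) (R_refl_src sS s1q) tS ts (esym e)).
- rewrite s1q in s_hor; rewrite t1q in t_hor.
  by apply: reach_inj (R_refl_src sS s1q) (R_refl_src tS t1q) _; rewrite // /ple st s1q.
Qed.

(* Likewise a vertical arrow has the highest source ([vertical_src_max]). *)
Definition label_src s :=
  if s.2.2 then (if s.1.1 == s.2.1 then n else s.1.1) else reach s false.

Lemma label_src_neq s t : s \in S -> t \in S -> ~~ s.1.2 -> ~~ t.1.2 ->
  t != s -> s.1.1 <= t.1.1 -> label_src s != label_src t.
Proof.
move=> sS tS s1p t1p ts st; rewrite /label_src.
have [sn tn] := (tgt_le sS, tgt_le tS).
case/andP: (src_le_tgt sS) => sle _; case/andP: (src_le_tgt tS) => tle _.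
case s2q: s.2.2; case t2q: t.2.2.
- have [st1|ne] := eqVneq s.1.1 t.1.1.
    apply: contra_neq ts => _; symmetry.
    apply: same_source => //; last by rewrite s2q t2q.
    by apply/pair_eqP; rewrite /= st1 (negPf s1p) (negPf t1p) !eqxx.
  have lt_st : s.1.1 < t.1.1 by rewrite ltn_neqAle ne.
  have [s_vert|s_nvert] := eqVneq s.1.1 s.2.1;
    have [t_vert|t_nvert] := eqVneq t.1.1 t.2.1.
  + by have := vertical_src_max sS tS s1p s2q s_vert t1p t2q lt_st.
  + by rewrite eq_sym neq_ltn (leq_trans _ tn) // ltn_neqAle t_nvert.
  + by rewrite neq_ltn (leq_trans _ sn) // ltn_neqAle s_nvert.
  + exact: ne.
- have [_ t_lt _] := reach_bound tS t2q (R_refl_src tS (negPf t1p)).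
  have [s_vert|s_nvert] := eqVneq s.1.1 s.2.1; apply/eqP => e.
    by move: t_lt; rewrite -e ltnNge tn.
  apply: (reach_blocks tS t2q (R_refl_src tS (negPf t1p)) sS _ e) => //.
    by rewrite eq_sym.
  by rewrite ltn_neqAle s_nvert.
- have [_ s_lt _] := reach_bound sS s2q (R_refl_src sS (negPf s1p)).
  have [t_vert|t_nvert] := eqVneq t.1.1 t.2.1; apply/eqP => e.
    by move: s_lt; rewrite e ltnNge sn.
  apply: (reach_blocks sS s2q (R_refl_src sS (negPf s1p)) tS ts (esym e)) => //.
  by rewrite ltn_neqAle t_nvert.
- apply: reach_inj (R_refl_src sS (negPf s1p)) (R_refl_src tS (negPf t1p)) _ => //.
  by rewrite /ple st (negPf s1p).
Qed.

Lemma label_tgt_lt s : s \in S -> s.2.2 -> label_tgt s < n.+1.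
Proof.
move=> sS s2q; rewrite ltnS /label_tgt; have sn := tgt_le sS.
case: ifP => s1q; first exact: src_le.
case: ifP => // bs; have [_ lt _] := reach_bound sS s2q bs.
exact: ltnW (leq_trans lt sn).
Qed.

Lemma label_horiz_lt s : s \in S -> s.1.2 == s.2.2 -> label_horiz s < n.
Proof.
move=> sS /eqP s_hor; rewrite /label_horiz; have sn := tgt_le sS.
case: ifP => s1q; first by apply: leq_trans (src_lt_tgt sS s_hor) sn.
rewrite s1q in s_hor.
have [_ lt _] := reach_bound sS (esym s_hor) (R_refl_src sS s1q).
exact: leq_trans lt sn.
Qed.

Lemma label_src_lt s : s \in S -> ~~ s.1.2 -> label_src s < n.+1.
Proof.
move=> sS s1p; rewrite ltnS /label_src; have sn := tgt_le sS.
case: ifP => s2q; first by case: ifP => // _; apply: src_le.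
have [_ lt _] := reach_bound sS s2q (R_refl_src sS (negPf s1p)).
exact: ltnW (leq_trans lt sn).
Qed.

Hypothesis S_uniq : uniq S.

Lemma witnessed_size_bound : 2 * size S <= 3 * n + 2.
Proof.
have two : {in S, forall s : pt * pt, s.2.2 + (s.1.2 == s.2.2) + ~~ s.1.2 = 2}.
  by move=> s /src_q_tgt_q; case: s.1.2; case: s.2.2.
have c_tgt := count_inj_leq S_uniq (inj_by_source label_tgt_neq) label_tgt_lt.
have c_horiz := count_inj_leq S_uniq (inj_by_source label_horiz_neq) label_horiz_lt.
have c_src := count_inj_leq S_uniq (inj_by_source label_src_neq) label_src_lt.
rewrite -(count_double_cover two).
by apply: leq_trans (leq_add (leq_add c_tgt c_horiz) c_src) _; lia.
Qed.

End IndependentArrows.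

Lemma independent_size_bound n S :
  uniq S -> {in S, forall s, lattice_arrow n s} -> independent n S ->
  2 * size S <= 3 * n + 2.
Proof.
by move=> S_uniq S_arrow [R R_indep]; apply: witnessed_size_bound R_indep S_uniq.
Qed.

Section PrimePowers.
Variables p q : nat.
Hypotheses (p_pr : prime p) (q_pr : prime q) (p_neq_q : p != q).

Lemma dvdn_pq_exp a b r t :
  (p ^ a * q ^ r %| p ^ b * q ^ t) = (a <= b) && (r <= t).
Proof.
have cop i j : coprime (p ^ i) (q ^ j).
  by rewrite coprimeXl // coprimeXr // prime_coprime // dvdn_prime2.
rewrite Gauss_dvd // Gauss_dvdl // Gauss_dvdr 1?coprime_sym //.
by rewrite !dvdn_Pexp2l ?prime_gt1.
Qed.

Lemma logn_pq a r : logn p (p ^ a * q ^ r) = a.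
Proof.
rewrite lognM ?expn_gt0 ?prime_gt0 // pfactorK // logn_coprime ?addn0 //.
by rewrite coprimeXr // prime_coprime // dvdn_prime2.
Qed.

Lemma dvdn_q_pq a (r : bool) : (q %| p ^ a * q ^ r) = r.
Proof. by have := dvdn_pq_exp 0 a 1 r; rewrite expn0 mul1n expn1 => ->; case: r. Qed.

Lemma divisor_pnq n d :
  d %| p ^ n * q -> exists2 x : pt, x.1 <= n & d = p ^ x.1 * q ^ x.2.
Proof.
have [/dvdnP[d' ->]|q_d] := boolP (q %| d).
  rewrite dvdn_pmul2r ?prime_gt0 // => /(dvdn_pfactor _ _ p_pr)[a an ->].
  by exists (a, true).
rewrite Gauss_dvdl; last by rewrite coprime_sym prime_coprime.
by case/(dvdn_pfactor _ _ p_pr) => a an ->; exists (a, false); rewrite ?muln1.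
Qed.

End PrimePowers.

Lemma minimal_generating_set_witness (gT : finGroupType) (G : {group gT}) S T s :
  minimal_generating_set G S T -> s \in S ->
  exists T', [/\ transfer_system G T', S :\ s \subset T' & s \notin T'].
Proof.
case=> _ [T_ts S_T T_min] S_min sS; apply: NNPP => no_witness.
apply: (S_min s sS); split=> //; first exact: subset_trans (subD1set S s) S_T.
move=> T' T'_ts sub; apply: T_min => //; apply/subsetP => a aS.
have [-> | a_s] := eqVneq a s; last by apply: (subsetP sub); rewrite !inE a_s.
by apply: contraT => s_T'; case: no_witness; exists T'.
Qed.

Section CyclicSubgroups.
Variables (gT : finGroupType) (g : gT) (p q n : nat).
Hypotheses (p_pr : prime p) (q_pr : prime q) (p_neq_q : p != q).
Hypothesis og : #[g]%g = p ^ n * q.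

Definition subgroup_at (x : pt) : {group gT} :=
  <[g ^+ (p ^ (n - x.1) * q ^ (~~ x.2))]>%G.

Definition level (A : {set gT}) : pt := (logn p #|A|, q %| #|A|).

Lemma card_subgroup_at x : x.1 <= n -> #|subgroup_at x| = p ^ x.1 * q ^ x.2.
Proof.
move=> xn; rewrite /subgroup_at /=; set d := p ^ (n - x.1) * _.
have og_d : #[g]%g = d * (p ^ x.1 * q ^ x.2).
  by rewrite og mulnACA -!expnD subnK //; case: x.2.
have d_gt0 : 0 < d by rewrite muln_gt0 !expn_gt0 !prime_gt0.
rewrite [LHS]orderXdiv og_d; first exact: mulKn.
exact: dvdn_mulr.
Qed.

Lemma subgroup_at_sub x : subgroup_at x \subset <[g]>%g.
Proof. exact: cycleX. Qed.

Lemma subgroup_at_subset x y : x.1 <= n -> y.1 <= n ->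
  (subgroup_at x \subset subgroup_at y) = ple x y.
Proof.
move=> xn yn; rewrite -(cardSg_cyclic (cycle_cyclic g)) ?subgroup_at_sub //.
by rewrite !card_subgroup_at // dvdn_pq_exp // /ple; case: (x.2); case: (y.2).
Qed.

Lemma levelP (A : {set gT}) : subgrp <[g]>%G A ->
  (level A).1 <= n /\ subgroup_at (level A) = A :> {set gT}.
Proof.
case/andP=> gA sAg; pose H := Group gA.
have /divisor_pnq[//|//|x xn oH] : #|H| %| p ^ n * q by rewrite -og cardSg.
have -> : level A = x.
  by rewrite /level -[#|A|]/#|H| oH logn_pq ?dvdn_q_pq //; case: x {xn oH}.
split=> //; apply/eqP; rewrite -[A]/(gval H) eq_sym.
by rewrite (eq_subG_cyclic (cycle_cyclic g)) ?subgroup_at_sub // card_subgroup_at ?oH.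
Qed.

Lemma subgroup_at_subgrp x : subgrp <[g]>%G (subgroup_at x).
Proof. by rewrite /subgrp groupP subgroup_at_sub. Qed.

Lemma subgroup_atI x y : x.1 <= n -> y.1 <= n ->
  subgroup_at x :&: subgroup_at y = subgroup_at (pmeet x y).
Proof.
move=> xn yn; have mn : (pmeet x y).1 <= n := leq_trans (geq_minl _ _) xn.
have sI : subgrp <[g]>%G (subgroup_at x :&: subgroup_at y).
  by rewrite /subgrp group_setI subIset ?subgroup_at_sub.
have [wn defI] := levelP sI.
apply/eqP; rewrite eqEsubset; apply/andP; split.
  rewrite -defI subgroup_at_subset // ple_pmeet -!subgroup_at_subset //.
  by rewrite defI subsetIl subsetIr.
by rewrite subsetI !subgroup_at_subset // -ple_pmeet /ple !leqnn !implybb.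
Qed.

Definition arrow_at (s : pt * pt) : arrow gT :=
  (subgroup_at s.1 : {set gT}, subgroup_at s.2 : {set gT}).

Definition point_rel (T : {set arrow gT}) : rel pt :=
  fun x y => [&& x.1 <= n, y.1 <= n & arrow_at (x, y) \in T].

Lemma transfer_rel_point_rel T :
  transfer_system <[g]>%G T -> transfer_rel n (point_rel T).
Proof.
case=> _ T_id T_comp _ T_res; split.
- by move=> x xn; rewrite /point_rel xn T_id ?subgroup_at_subgrp.
- move=> y x z /and3P[xn _ xy] /and3P[_ zn yz].
  by rewrite /point_rel xn zn (T_comp _ _ _ xy yz).
move=> x y z /and3P[xn yn xy] zn zy.
rewrite /point_rel zn (leq_trans (geq_minl _ _) xn) /arrow_at /= -subgroup_atI //.
by apply: T_res xy _ _; rewrite ?subgroup_at_subgrp ?subgroup_at_subset.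
Qed.

Lemma arrow_atK a : is_arrow <[g]>%G a -> arrow_at (level a.1, level a.2) = a.
Proof.
case: a => A B /and3P[/levelP[_ defA] /levelP[_ defB] _].
by rewrite /arrow_at /= defA defB.
Qed.

Section Levels.
Variables S T : {set arrow gT}.
Hypothesis S_min : minimal_generating_set <[g]>%G S T.

Definition levels := [seq (level a.1, level a.2) | a <- enum S].

Lemma mem_levels s : s \in levels -> exists2 a, a \in S & s = (level a.1, level a.2).
Proof. by case/mapP=> a; rewrite mem_enum; exists a. Qed.

Lemma levels_lattice_arrow : {in levels, forall s, lattice_arrow n s}.
Proof.
move=> _ /mem_levels[a aS ->]; case: S_min => S_arr _ _.
case/andP: (S_arr _ aS) => /and3P[/levelP[A_n defA] /levelP[B_n defB] AB] not_id.
rewrite /lattice_arrow /= B_n -subgroup_at_subset // defA defB AB /=.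
by apply: contraNneq not_id => eq_lvl; rewrite /is_identity -defA -defB eq_lvl.
Qed.

Lemma arrow_of_mem a : a \in S -> is_arrow <[g]>%G a.
Proof. by case: S_min => S_arr _ _ /S_arr/andP[]. Qed.

Lemma levels_uniq : uniq levels.
Proof.
rewrite map_inj_in_uniq ?enum_uniq // => a b; rewrite !mem_enum => aS bS eq_lvl.
by rewrite -(arrow_atK (arrow_of_mem aS)) -(arrow_atK (arrow_of_mem bS)) eq_lvl.
Qed.

Lemma size_levels : size levels = #|S|.
Proof. by rewrite size_map cardE. Qed.

Lemma levels_independent : independent n levels.
Proof.
have witness a : exists T' : {set arrow gT}, a \in S ->
    [/\ transfer_system <[g]>%G T', S :\ a \subset T' & a \notin T'].
  have [aS|_] := boolP (a \in S); last by exists set0.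
  by have [T' ?] := minimal_generating_set_witness S_min aS; exists T'.
have [Tf Tf_spec] := fin_all_exists witness.
exists (fun s => point_rel (Tf (arrow_at s))) => _ /mem_levels[a aS ->].
rewrite arrow_atK ?arrow_of_mem //; have [Ta_ts Ta_sub a_notin] := Tf_spec a aS.
split; first exact: transfer_rel_point_rel.
  by rewrite /point_rel /= arrow_atK ?arrow_of_mem // (negPf a_notin) !andbF.
move=> _ /mem_levels[b bS ->] ba.
have /and3P[/levelP[b1n _] /levelP[b2n _] _] := arrow_of_mem bS.
rewrite /point_rel /= b1n b2n arrow_atK ?arrow_of_mem //.
by apply: (subsetP Ta_sub); rewrite !inE bS andbT; apply: contraNneq ba => ->.
Qed.

Lemma minimal_generating_set_size_bound : 2 * #|S| <= 3 * n + 2.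
Proof.
rewrite -size_levels; apply: independent_size_bound.
- exact: levels_uniq.
- exact: levels_lattice_arrow.
- exact: levels_independent.
Qed.
End Levels.

End CyclicSubgroups.

Theorem corollary6p4 (gT : finGroupType) (G : {group gT}) (p q n : nat)
  (S T : {set (({set gT} * {set gT})%type)}) :
  prime p -> prime q -> p != q -> 1 <= n ->
  cyclic G -> #|G| = (p ^ n * q)%N ->
  minimal_generating_set G S T ->
  forall k : nat,
    (n = (2 * k)%N -> #|S| <= 3 * k + 1) /\
    (n = (2 * k + 1)%N -> #|S| <= 3 * k + 2).
Proof.
(* The bound holds for n = 0 as well. *)
move=> p_pr q_pr p_neq_q _ /cyclicP[g defG] oG S_min k.
have og : #[g]%g = p ^ n * q by rewrite -oG defG.
rewrite (group_inj defG) in S_min.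
have bound : 2 * #|S| <= 3 * n + 2 :=
  minimal_generating_set_size_bound p_pr q_pr p_neq_q og S_min.
by split=> n_k; rewrite n_k in bound; lia.
Qed.
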